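(* For any $d\ge1$, $T\ge1$ and any unit vectors $|\psi_1\rangle,\dots,|\psi_T\rangle\in\mathbb{C}^d$, $$\sum_{\pi\in S_T}\mathrm{Tr}\!\left(\pi\bigotimes_{t=1}^T|\psi_t\rangle\langle\psi_t|\right)\ \ge\ 1.$$
   Context: $S_T$ is the symmetric group on $T$ letters. For $\pi\in S_T$, the corresponding permutation operator on $(\mathbb{C}^d)^{\otimes T}$ (also denoted $\pi$) is the linear map with $\pi(|v_1\rangle\otimes\cdots\otimes|v_T\rangle)=|v_{\pi^{-1}(1)}\rangle\otimes\cdots\otimes|v_{\pi^{-1}(T)}\rangle$. *)

From HB Require Import structures.
From mathcomp Require Import all_boot all_order all_algebra all_fingroup.
From mathcomp Require Import complex Rstruct.
From Stdlib Require Import Reals.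
Set Implicit Arguments. Unset Strict Implicit. Unset Printing Implicit Defensive.
Import Order.TTheory GRing.Theory Num.Theory.
Local Open Scope ring_scope.

Definition C : Type := complex Rdefinitions.R.

(* Standard product basis of (C^d)^{⊗T}: e_f = e_{f 1} ⊗ ... ⊗ e_{f T}. *)
Definition tbasis (d T : nat) := {ffun 'I_T -> 'I_d}.

(* Linear operators on (C^d)^{⊗T}, given by their matrix in the product basis. *)
Definition top (d T : nat) := tbasis d T -> tbasis d T -> C.

Definition top_mul d T (X Y : top d T) : top d T :=
  fun f g => \sum_(h : tbasis d T) X f h * Y h g.

Definition top_trace d T (X : top d T) : C := \sum_(f : tbasis d T) X f f.

(* Permutation operator: pi (v_1 ⊗ ... ⊗ v_T) = v_{pi^-1 1} ⊗ ... ⊗ v_{pi^-1 T},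
   i.e. pi e_f = e_{f o pi^-1}; matrix entry (g, f) = [g == f o pi^-1]. *)
Definition perm_op d T (s : 'S_T) : top d T :=
  fun g f => (g == [ffun t => f ((s^-1)%g t)] :> tbasis d T)%:R.

Definition tensor_ops d T (A : 'I_T -> 'M[C]_d) : top d T :=
  fun f g => \prod_(t < T) A t (f t) (g t).

Definition ketbra d (v : 'cV[C]_d) : 'M[C]_d := v *m (map_mx Num.conj v)^T.

Definition unit_vec d (v : 'cV[C]_d) : Prop := \sum_(i < d) `|v i 0| ^+ 2 = 1.

From mathcomp Require Import all_boot all_order all_algebra all_fingroup.
From mathcomp Require Import complex Rstruct ring.
Set Implicit Arguments. Unset Strict Implicit. Unset Printing Implicit Defensive.
Import Order.TTheory GRing.Theory Num.Theory.
Local Open Scope ring_scope.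

(* With x_t the coordinates of psi_t, the sum of traces is
   (1/T!) |P|^2, where P = sum_s s (x_1 (x) ... (x) x_T) has the permanents
   sum_s prod_t x_t(h(s t)) as coordinates.  Expanding these permanents along
   the first factor writes |P|^2 as a double sum over positions k, l: each of
   the T diagonal terms equals |x_1|^2 times the same quantity for
   x_2, ..., x_T, and each cross term is a sum of squared moduli after the
   positions k and l are swapped.  Hence |P|^2 >= T! prod_t |x_t|^2 = T!. *)

Section UnliftPerm.
Variable n : nat.
Implicit Types (i j : 'I_n.+1) (s : 'S_n.+1).

Definition unlift_perm_fun i s (k : 'I_n) : 'I_n :=
  odflt k (unlift (s i) (s (lift i k))).

Lemma lift_unlift_perm_fun i s k : lift (s i) (unlift_perm_fun i s k) = s (lift i k).
Proof.
rewrite /unlift_perm_fun; have:= neq_lift i k.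
by rewrite -(can_eq (permK s)) => /unlift_some[] ? ? ->.
Qed.

Lemma unlift_perm_fun_inj i s : injective (unlift_perm_fun i s).
Proof.
apply: can_inj (unlift_perm_fun (s i) s^-1%g) _ => k.
by rewrite {1}/unlift_perm_fun lift_unlift_perm_fun !permK liftK.
Qed.

Definition unlift_perm i s : 'S_n := perm (@unlift_perm_fun_inj i s).

Lemma unlift_permK i s : lift_perm i (s i) (unlift_perm i s) = s.
Proof.
apply/permP => k; case: (unliftP i k) => [k'|] ->; rewrite ?lift_perm_id //.
by rewrite lift_perm_lift permE lift_unlift_perm_fun.
Qed.

Lemma unlift_lift_perm i j (s : 'S_n) : unlift_perm i (lift_perm i j s) = s.
Proof.
by apply/permP => k; rewrite permE /unlift_perm_fun lift_perm_lift lift_perm_id liftK.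
Qed.

Lemma sum_lift_perm (R : nmodType) i j (F : 'S_n.+1 -> R) :
  \sum_(s : 'S_n.+1 | s i == j) F s = \sum_(s : 'S_n) F (lift_perm i j s).
Proof.
rewrite (reindex (lift_perm i j)) => [|]; last first.
  exists (unlift_perm i) => [s _ | s /eqP si]; first exact: unlift_lift_perm.
  by rewrite -{1}si unlift_permK.
by apply: eq_bigl => s; rewrite lift_perm_id eqxx.
Qed.

End UnliftPerm.

Section Symmetrization.
Variables (F : numClosedFieldType) (I : finType).
Local Notation idx n := {ffun 'I_n -> I}.

Definition sym_coef n (x : 'I_n -> I -> F) (h : idx n) : F :=
  \sum_(s : 'S_n) \prod_(t < n) x t (h (s t)).

Definition sym_sqnorm n (x : 'I_n -> I -> F) : F :=
  \sum_(h : idx n) (sym_coef x h)^* * sym_coef x h.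

Definition sqnorm (v : I -> F) : F := \sum_i (v i)^* * v i.

Definition ffun_perm n (h : idx n) (s : 'S_n) : idx n := [ffun t => h (s t)].

Definition ffun_del n (k : 'I_n.+1) (h : idx n.+1) : idx n := [ffun t => h (lift k t)].

Definition ffun_ins n (k : 'I_n.+1) (a : I) (g : idx n) : idx n.+1 :=
  [ffun i => if unlift k i is Some t then g t else a].

Definition ffun_set n (g : idx n) (l : 'I_n) (a : I) : idx n :=
  [ffun t => if t == l then a else g t].

Lemma sqnorm_ge0 v : 0 <= sqnorm v.
Proof. by apply: sumr_ge0 => i _; rewrite mulrC mul_conjC_ge0. Qed.

Lemma ffun_perm_inj n (s : 'S_n) : injective (fun h : idx n => ffun_perm h s).
Proof.
move=> h h' /(congr1 (fun f : idx n => f (s^-1 _)%g)) E; apply/ffunP => t.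
by have := E t; rewrite /= !ffunE permKV.
Qed.

Lemma sym_coef_perm n x (h : idx n) s : sym_coef x (ffun_perm h s) = sym_coef x h.
Proof.
rewrite /sym_coef [RHS](reindex_inj (mulIg s)); apply: eq_bigr => u _.
by apply: eq_bigr => t _; rewrite ffunE permM.
Qed.

Lemma ffun_ins_id n (k : 'I_n.+1) a g : ffun_ins k a g k = a.
Proof. by rewrite ffunE unlift_none. Qed.

Lemma ffun_ins_lift n (k : 'I_n.+1) a g t : ffun_ins k a g (lift k t) = g t.
Proof. by rewrite ffunE liftK. Qed.

Lemma ffun_del_ins n (k : 'I_n.+1) a g : ffun_del k (ffun_ins k a g) = g.
Proof. by apply/ffunP => t; rewrite ffunE ffun_ins_lift. Qed.

Lemma ffun_set_ins n (l : 'I_n.+1) a b g :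
  ffun_set (ffun_ins l b g) l a = ffun_ins l a g.
Proof.
apply/ffunP => t; rewrite !ffunE; case: (unliftP l t) => [t'|] ->.
  by rewrite eq_sym (negbTE (neq_lift _ _)).
by rewrite eqxx.
Qed.

Lemma sum_ffun_ins n (k : 'I_n.+1) (G : idx n.+1 -> F) :
  \sum_h G h = \sum_(g : idx n) \sum_(a : I) G (ffun_ins k a g).
Proof.
rewrite pair_big (reindex (fun p : idx n * I => ffun_ins k p.2 p.1)) //=.
exists (fun h => (ffun_del k h, h k)) => [[g a] _ | h _] /=.
  by rewrite ffun_del_ins ffun_ins_id.
by apply/ffunP => i; rewrite ffunE; case: (unliftP k i) => [t|] ->; rewrite ?ffunE.
Qed.

Lemma sym_coef_expand n (x : 'I_n.+1 -> I -> F) h :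
  sym_coef x h = \sum_(k < n.+1)
    x ord0 (h k) * sym_coef (fun t => x (lift ord0 t)) (ffun_del k h).
Proof.
rewrite /sym_coef (partition_big (fun s : 'S_n.+1 => s ord0) xpredT) //=.
apply: eq_bigr => k _; rewrite sum_lift_perm big_distrr /=.
apply: eq_bigr => s _; rewrite big_ord_recl lift_perm_id; congr (_ * _).
by apply: eq_bigr => t _; rewrite lift_perm_lift ffunE.
Qed.

Lemma sym_coef_swap n (y : 'I_n -> I -> F) (k l : 'I_n.+1) (h : idx n.+1) :
  sym_coef y (ffun_del l h) = sym_coef y (ffun_del k (ffun_perm h (tperm k l))).
Proof.
rewrite -(sym_coef_perm y _ (unlift_perm k (tperm k l))); congr (sym_coef y _).
apply/ffunP => t; rewrite !ffunE.
by rewrite -{2}(unlift_permK k (tperm k l)) tpermL lift_perm_lift.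
Qed.

Lemma ffun_del_perm_ins n (k : 'I_n.+2) (l : 'I_n.+1) a g :
  ffun_del k (ffun_perm (ffun_ins k a g) (tperm k (lift k l))) = ffun_set g l a.
Proof.
apply/ffunP => t; rewrite !ffunE.
have [->|ne] := eqVneq t l; first by rewrite tpermR unlift_none.
by rewrite tpermD ?liftK ?neq_lift // (inj_eq (@lift_inj _ k)) eq_sym.
Qed.

Lemma sym_sqnorm_diag n (k : 'I_n.+1) (z : I -> F) (y : 'I_n -> I -> F) :
  \sum_(h : idx n.+1) (z (h k) * sym_coef y (ffun_del k h))^*
                     * (z (h k) * sym_coef y (ffun_del k h))
  = sqnorm z * sym_sqnorm y.
Proof.
rewrite (sum_ffun_ins k) /sqnorm /sym_sqnorm big_distrl /= exchange_big /=.
apply: eq_bigr => a _; rewrite big_distrr /=; apply: eq_bigr => g _.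
by rewrite ffun_ins_id ffun_del_ins rmorphM mulrACA.
Qed.

(* Swapping positions [k] and [l] turns the cross term into a sum over the
   coordinates outside [{k, l}] of squared moduli [w^* * w]. *)
Lemma sym_sqnorm_cross_ge0 n (k l : 'I_n.+1) (z : I -> F) (y : 'I_n -> I -> F) :
  k != l ->
  0 <= \sum_(h : idx n.+1) (z (h k) * sym_coef y (ffun_del k h))^*
                          * (z (h l) * sym_coef y (ffun_del l h)).
Proof.
case: n k l y => [|n] k l y kl; first by rewrite (ord1 k) (ord1 l) eqxx in kl.
case: (unliftP k l) => [l'|] El; last by rewrite El eqxx in kl.
under eq_bigr => h _ do rewrite (sym_coef_swap y k l h).
rewrite (sum_ffun_ins k) El.
under eq_bigr => g _ do (under eq_bigr => a _ do
  rewrite ffun_ins_id ffun_del_ins ffun_ins_lift ffun_del_perm_ins).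
rewrite (sum_ffun_ins l'); apply: sumr_ge0 => r _.
under eq_bigr => b _ do (under eq_bigr => a _ do rewrite ffun_ins_id ffun_set_ins).
set w := \sum_(a : I) (z a)^* * sym_coef y (ffun_ins l' a r).
suff -> : \sum_(b : I) \sum_(a : I)
    (z a * sym_coef y (ffun_ins l' b r))^* * (z b * sym_coef y (ffun_ins l' a r))
  = w^* * w by rewrite mulrC mul_conjC_ge0.
rewrite /w rmorph_sum big_distrl /=; apply: eq_bigr => b _.
rewrite big_distrr /=; apply: eq_bigr => a _.
by rewrite !rmorphM /= (conjCK (z b)); ring.
Qed.

Lemma sym_sqnorm_step n (x : 'I_n.+1 -> I -> F) :
  n.+1%:R * (sqnorm (x ord0) * sym_sqnorm (fun t => x (lift ord0 t))) <= sym_sqnorm x.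
Proof.
set z := x ord0; set y := fun t => x (lift ord0 t).
rewrite /sym_sqnorm.
under [X in _ <= X]eq_bigr => h _ do
  rewrite sym_coef_expand -/z -/y rmorph_sum big_distrl /=
          (eq_bigr _ (fun k _ => big_distrr _ _ _)) /=.
rewrite exchange_big mulr_natl -[X in _ *+ X](card_ord n.+1) -sumr_const.
apply: ler_sum => k _; rewrite exchange_big (bigD1 k) //= sym_sqnorm_diag lerDl.
by apply: sumr_ge0 => l lk; apply: sym_sqnorm_cross_ge0; rewrite eq_sym.
Qed.

Lemma sym_sqnorm0 (x : 'I_0 -> I -> F) : sym_sqnorm x = 1.
Proof.
have coef1 h : sym_coef x h = 1.
  rewrite /sym_coef (eq_bigr (fun _ => 1)) => [|s _]; last by rewrite big_ord0.
  by rewrite sumr_const card_Sn.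
rewrite /sym_sqnorm (eq_bigr (fun _ => 1)) => [|h _]; last by rewrite coef1 rmorph1 mulr1.
by rewrite sumr_const card_ffun !card_ord.
Qed.

Lemma sym_sqnorm_ge n (x : 'I_n -> I -> F) :
  n`!%:R * \prod_(t < n) sqnorm (x t) <= sym_sqnorm x.
Proof.
elim: n x => [|n IH] x; first by rewrite big_ord0 sym_sqnorm0 mulr1.
apply: le_trans (sym_sqnorm_step x).
rewrite big_ord_recl factS natrM -!mulrA ler_wpM2l // mulrCA.
by rewrite ler_wpM2l ?sqnorm_ge0 ?IH.
Qed.

(* [sym_coef x] is invariant under [ffun_perm], so averaging the pairing of
   [x_1 (x) ... (x) x_n] with the symmetrised vector over all reorderings of
   the basis index gives the squared norm of the symmetrised vector. *)
Lemma sym_sqnorm_average n (x : 'I_n -> I -> F) :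
  n`!%:R * \sum_(h : idx n) (\prod_(t < n) x t (h t)) * (sym_coef x h)^* = sym_sqnorm x.
Proof.
rewrite -card_Sn -sumr_const big_distrl /=.
under eq_bigr => s _ do rewrite mul1r (reindex_inj (@ffun_perm_inj _ s)) /=.
rewrite exchange_big /=; apply: eq_bigr => h _.
under eq_bigr => s _ do rewrite sym_coef_perm.
by rewrite -big_distrl mulrC; congr (_ * _); apply: eq_bigr => s _;
   apply: eq_bigr => t _; rewrite ffunE.
Qed.

End Symmetrization.

Lemma trace_perm_tensor_ketbra d T (s : 'S_T) (psi : 'I_T -> 'cV[C]_d) :
  top_trace (top_mul (@perm_op d T s) (tensor_ops (fun t => ketbra (psi t))))
  = \sum_(h : tbasis d T)
      (\prod_(t < T) psi t (h t) 0) * (\prod_(t < T) psi t (h (s^-1 t)%g) 0)^*.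
Proof.
rewrite /top_trace /top_mul exchange_big /=; apply: eq_bigr => h _.
rewrite (bigD1 [ffun t => h (s^-1 t)%g]) //= /perm_op eqxx mul1r big1 ?addr0.
  rewrite /tensor_ops rmorph_prod -big_split /=; apply: eq_bigr => t _.
  by rewrite /ketbra !mxE big_ord1 !mxE ffunE.
by move=> f /negbTE ->; rewrite mul0r.
Qed.

Lemma sum_trace_perm_tensor_ketbra d T (psi : 'I_T -> 'cV[C]_d) :
  \sum_(s : 'S_T) top_trace (top_mul (@perm_op d T s) (tensor_ops (fun t => ketbra (psi t))))
  = \sum_(h : tbasis d T) (\prod_(t < T) psi t (h t) 0)
                           * (sym_coef (fun t i => psi t i 0) h)^*.
Proof.
under eq_bigr => s _ do rewrite trace_perm_tensor_ketbra.
rewrite exchange_big /=; apply: eq_bigr => h _.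
rewrite -big_distrr -rmorph_sum /= (reindex_inj invg_inj) /=.
by congr (_ * _ ^*); apply: eq_bigr => s _; rewrite invgK.
Qed.

Theorem mainTheorem8 (d T : nat) (hd : (1 <= d)%N) (hT : (1 <= T)%N)
  (psi : 'I_T -> 'cV[C]_d) (hpsi : forall t, unit_vec (psi t)) :
  1 <= \sum_(s : 'S_T) top_trace (top_mul (@perm_op d T s) (tensor_ops (fun t => ketbra (psi t)))).
Proof.
pose x t i := psi t i 0.
have sqnorm_x t : sqnorm (x t) = 1.
  by rewrite -(hpsi t); apply: eq_bigr => i _; rewrite normCK mulrC.
have := sym_sqnorm_ge x.
rewrite -sym_sqnorm_average -sum_trace_perm_tensor_ketbra.
rewrite (eq_bigr (fun=> 1)) // big1_eq mulr1.
by rewrite -{1}[T`!%:R]mulr1 ler_pM2l // ltr0n fact_gt0.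
Qed.
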